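(* Let $s\ge2$ be an even constant and $\epsilon$ a constant with $0<\epsilon<1/(2s-1)$. Let $I$ be an instance of the class $G^*_\epsilon$ with $n$ jobs, let $\mathcal{L}\subseteq\{0,1\}^n$ be the set of local optima of $I$, and for $x\in\{0,1\}^n$ let $h$ and $k$ be the numbers of large and small jobs, respectively, on the fuller machine of $x$. Then: (1) $|\{y\in\mathbb{R}:\exists x\in\{0,1\}^n \text{ with } f(x)=y\}|=O(n)$; (2) $|\{y\in\mathbb{R}:\exists x\in\mathcal{L} \text{ with } f(x)=y\}|=O(1)$; (3) for all $x\in\{0,1\}^n$ with $f(x)>1/2$, either $k=\Omega(n)$ and $x\notin\mathcal{L}$, or $\max(k,n-s-k)\ge\left(\frac12+a\right)(n-s)$ for some $a=\Omega(1)$.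
   Context: Partition problem: a solution $x\in\{0,1\}^n$ assigns job $i$ to machine $M_1$ if $x_i=0$ and to $M_2$ if $x_i=1$; the makespan $f(x)=\max\{\sum_i p_ix_i,\sum_i p_i(1-x_i)\}$ is minimised. The fuller machine is the machine whose load attains the makespan. A local optimum is a solution such that no solution at Hamming distance $1$ has strictly smaller makespan. The class $G^*_\epsilon$: instances with an even number $n$ of jobs, an even number $s=\Theta(1)$ of large jobs (jobs $1,\dots,s$), and processing times $p_i=\frac{1}{2s-1}-\frac{\epsilon}{2s}$ for $i\le s$ and $p_i=\frac{s-1}{n-s}\left(\frac{1}{2s-1}+\frac{\epsilon}{2(s-1)}\right)$ for $s<i\le n$ (the small jobs), where $0<\epsilon<1/(2s-1)$ is an arbitrarily small constant; note $\sum_i p_i=1$. Asymptotics are as $n\to\infty$. *)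

From HB Require Import structures.
From mathcomp Require Import all_boot all_order all_algebra.
Unset Printing Implicit Defensive.
Import Order.TTheory GRing.Theory Num.Theory.
Local Open Scope ring_scope.

(* Instances of the class G^*_eps : jobs are indexed by 'I_n, jobs i < s are
   the large jobs.  A solution is x : {ffun 'I_n -> bool}; x i = false means
   job i on machine M1, x i = true means job i on machine M2. *)

Section Partition.
Context {R : realFieldType}.

Definition ptime (s n : nat) (eps : R) (i : 'I_n) : R :=
  if (i < s)%N then 1 / (2 * s%:R - 1) - eps / (2 * s%:R)
  else (s%:R - 1) / (n%:R - s%:R) * (1 / (2 * s%:R - 1) + eps / (2 * (s%:R - 1))).

Definition load (s n : nat) (eps : R) (x : {ffun 'I_n -> bool}) (b : bool) : R :=
  \sum_(i | x i == b) ptime s n eps i.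

Definition makespan (s n : nat) (eps : R) (x : {ffun 'I_n -> bool}) : R :=
  Num.max (load s n eps x true) (load s n eps x false).

Definition flip (n : nat) (x : {ffun 'I_n -> bool}) (i : 'I_n) : {ffun 'I_n -> bool} :=
  [ffun j => if j == i then ~~ x j else x j].

Definition local_opt (s n : nat) (eps : R) (x : {ffun 'I_n -> bool}) : bool :=
  [forall i : 'I_n, ~~ (makespan s n eps (flip n x i) < makespan s n eps x)].

Definition fuller (s n : nat) (eps : R) (x : {ffun 'I_n -> bool}) : bool :=
  load s n eps x false <= load s n eps x true.

Definition nlarge_full (s n : nat) (eps : R) (x : {ffun 'I_n -> bool}) : nat :=
  #|[set i : 'I_n | (i < s)%N && (x i == fuller s n eps x)]|.
Definition nsmall_full (s n : nat) (eps : R) (x : {ffun 'I_n -> bool}) : nat :=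
  #|[set i : 'I_n | (s <= i)%N && (x i == fuller s n eps x)]|.

Definition num_values (s n : nat) (eps : R) : nat :=
  size (undup [seq makespan s n eps x | x <- enum {ffun 'I_n -> bool}]).

Definition num_local_values (s n : nat) (eps : R) : nat :=
  size (undup [seq makespan s n eps x |
                 x <- enum {ffun 'I_n -> bool} & local_opt s n eps x]).
End Partition.

From HB Require Import structures.
From mathcomp Require Import all_boot all_order all_algebra.
From mathcomp Require Import ring lra zify.
Import Order.TTheory GRing.Theory Num.Theory.
Local Open Scope ring_scope.

(* Every machine load has the form h * plarge + k * psmall, with h <= s large
   and k <= n - s small jobs on the machine, so there are O(n) makespan values.
   Moving a small job off the fuller machine, of load L >= 1/2, improves the
   makespan exactly when 2 L > 1 + psmall.  Hence a local optimum either has no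
   small job on its fuller machine (makespan h * plarge) or has L in
   [1/2, (1 + psmall)/2], an interval shorter than psmall in which h determines
   k: O(1) values.  Finally L - 1/2 = (h - s/2) plarge + (k - m/2) psmall with
   m = n - s.  If k is within plarge * m / 2 of m/2, the second term is below
   plarge / 2 in absolute value; as s and m are even and psmall <= plarge,
   L > 1/2 then forces L - 1/2 > psmall / 2, so the solution is not a local
   optimum, and k > m/4 >= n/6. *)

Lemma size_undup_subset (T : eqType) (l t : seq T) :
  {subset l <= t} -> (size (undup l) <= size t)%N.
Proof.
move=> sub_lt; apply: uniq_leq_size (undup_uniq l) _ => v.
by rewrite mem_undup; apply: sub_lt.
Qed.

Lemma find_iota0_least (P : pred nat) m k :
  (k < m)%N -> P k -> (forall j, (j < k)%N -> ~~ P j) -> find P (iota 0 m) = k.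
Proof.
move=> lt_km Pk minPk.
have hasP : has P (iota 0 m) by apply/hasP; exists k; rewrite ?mem_iota.
case: findP => [|i]; first by rewrite hasP.
rewrite size_iota => lt_im Pi beforeP.
have [lt_ik|lt_ki|//] := ltngtP i k.
- by have := Pi 0%N; rewrite nth_iota // add0n (negbTE (minPk i lt_ik)).
- by have := beforeP 0%N k lt_ki; rewrite nth_iota ?add0n ?Pk // (ltn_trans lt_ki).
Qed.

Lemma sum_if_const (V : nmodType) (I : finType) (P Q : pred I) (a b : V) :
  \sum_(i | P i) (if Q i then a else b) =
  a *+ #|[set i | Q i && P i]| + b *+ #|[set i | ~~ Q i && P i]|.
Proof.
rewrite (bigID Q) /= -!sumr_const.
congr (_ + _); apply: eq_big => i; rewrite ?inE 1?andbC //.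
- by case/andP=> ->.
- by case/andP=> /negbTE ->.
Qed.

Lemma natr_even {R : pzSemiRingType} {n} : ~~ odd n -> n%:R = 2 * (n./2)%:R :> R.
Proof. by move=> /negbTE n_even; rewrite -natrM mul2n -[in LHS](odd_double_half n) n_even. Qed.

Lemma int_combination_gap (R : realFieldType) (a b : R) (i j : int) :
  0 < b <= a -> `|j%:~R * b| < a / 2 -> 0 < i%:~R * a + j%:~R * b ->
  b / 2 < i%:~R * a + j%:~R * b.
Proof.
case/andP=> b_gt0 le_ba /ltr_normlP[jb_lo jb_hi] comb_gt0.
have [i_lt0|i_gt0|i_eq0] := ltgtP i 0.
- have : (i + 1)%:~R * a <= 0 :> R.
    by apply: mulr_le0_ge0; [rewrite lerz0; lia | lra].
  rewrite intrD mulrDl mul1r; lra.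
- have : 0 <= (i - 1)%:~R * a :> R.
    by apply: mulr_ge0; [rewrite ler0z; lia | lra].
  rewrite intrB mulrBl mul1r; lra.
- rewrite i_eq0 mulr0z mul0r add0r in comb_gt0 *.
  move: comb_gt0; rewrite (pmulr_lgt0 _ b_gt0) ltr0z => j_gt0.
  have : 0 <= (j - 1)%:~R * b :> R by apply: mulr_ge0; [rewrite ler0z; lia | lra].
  rewrite intrB mulrBl mul1r; lra.
Qed.

Lemma dist_half_lt_of_maxn_lt {R : realFieldType} {a : R} {k m : nat} : (k <= m)%N ->
  (maxn k (m - k))%:R < (1 / 2 + a) * m%:R -> `|k%:R - m%:R / 2| < a * m%:R.
Proof.
move=> le_km lt_max; rewrite ltr_norml.
have : k%:R <= (maxn k (m - k))%:R :> R by rewrite ler_nat leq_maxl.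
have : (m - k)%:R <= (maxn k (m - k))%:R :> R by rewrite ler_nat leq_maxr.
by rewrite natrB //; lra.
Qed.

Lemma card_ord_ltn {n m : nat} : (m <= n)%N -> #|[set i : 'I_n | (i < m)%N]| = m.
Proof.
move=> le_mn; rewrite -sum1_card (eq_bigl (fun i : 'I_n => (i < m)%N)) => [|i].
  by rewrite -(big_ord_widen n (fun _ => 1%N)) // sum1_card card_ord.
by rewrite inE.
Qed.

Lemma card_ord_geq {n m : nat} : (m <= n)%N -> #|[set i : 'I_n | (m <= i)%N]| = (n - m)%N.
Proof.
move=> le_mn; rewrite -[in RHS](card_ord n) -(cardsC [set i : 'I_n | (i < m)%N]).
by rewrite card_ord_ltn // addKn; apply: eq_card => i; rewrite !inE -leqNgt.
Qed.

Section TwoJobSizes.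
Variables (R : realFieldType) (s n : nat) (eps : R).

Local Notation ptime := (ptime s n eps).
Local Notation load := (load s n eps).
Local Notation makespan := (makespan s n eps).
Local Notation fuller := (fuller s n eps).
Local Notation local_opt := (local_opt s n eps).
Local Notation solution := {ffun 'I_n -> bool}.

Definition plarge : R := 1 / (2 * s%:R - 1) - eps / (2 * s%:R).
Definition psmall : R :=
  (s%:R - 1) / (n%:R - s%:R) * (1 / (2 * s%:R - 1) + eps / (2 * (s%:R - 1))).

Lemma ptimeE (i : 'I_n) : ptime i = if (i < s)%N then plarge else psmall.
Proof. by []. Qed.

Lemma ptime_small (i : 'I_n) : (s <= i)%N -> ptime i = psmall.
Proof. by rewrite ptimeE ltnNge => ->. Qed.

Definition nlarge_on (x : solution) (b : bool) : nat :=
  #|[set i : 'I_n | (i < s)%N && (x i == b)]|.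
Definition nsmall_on (x : solution) (b : bool) : nat :=
  #|[set i : 'I_n | (s <= i)%N && (x i == b)]|.

Lemma load_counts x b :
  load x b = (nlarge_on x b)%:R * plarge + (nsmall_on x b)%:R * psmall.
Proof.
rewrite /load sum_if_const -/plarge -/psmall !mulr_natl; congr (_ + _ *+ _).
by apply: eq_card => i; rewrite !inE -leqNgt.
Qed.

Lemma load_compl_sum x b : load x b + load x (~~ b) = \sum_i ptime i.
Proof.
rewrite [RHS](bigID (fun i => x i == b)); congr (_ + _).
by apply: eq_bigl => i; case: b; case: (x i).
Qed.

Lemma load_flip x i : load (flip n x i) (x i) = load x (x i) - ptime i.
Proof.
rewrite /load [in RHS](bigD1 i) //= addrC addrK; apply: eq_bigl => j; rewrite ffunE.
by case: (eqVneq j i) => [->|_]; [case: (x i) | rewrite andbT].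
Qed.

Lemma makespan_fuller x : makespan x = load x (fuller x).
Proof. by rewrite /makespan /fuller; case: leP => [/max_idPl|/ltW/max_idPr]. Qed.

Hypotheses (lt_sn : (s < n)%N) (le2s : (2 <= s)%N).

Lemma natr_s_ge2 : 2 <= s%:R :> R.
Proof. by rewrite (ler_nat R 2). Qed.

Lemma nlarge_on_le x b : (nlarge_on x b <= s)%N.
Proof.
rewrite -[leqRHS](card_ord_ltn (ltnW lt_sn)); apply/subset_leq_card/subsetP => i.
by rewrite !inE => /andP[].
Qed.

Lemma nsmall_on_le x b : (nsmall_on x b <= n - s)%N.
Proof.
rewrite -(card_ord_geq (ltnW lt_sn)); apply/subset_leq_card/subsetP => i.
by rewrite !inE => /andP[].
Qed.

Lemma sum_ptime : \sum_i ptime i = s%:R * plarge + (n - s)%:R * psmall.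
Proof.
rewrite !mulr_natl sum_if_const -/plarge -/psmall; congr (_ *+ _ + _ *+ _).
- rewrite -[RHS](card_ord_ltn (ltnW lt_sn)).
  by apply: eq_card => i; rewrite !inE andbT.
- rewrite -[RHS](card_ord_geq (ltnW lt_sn)).
  by apply: eq_card => i; rewrite !inE andbT -leqNgt.
Qed.

Lemma sum_ptime_eq1 : \sum_i ptime i = 1.
Proof.
have s_ge2 := natr_s_ge2.
have lt_sn_R : s%:R < n%:R :> R by rewrite ltr_nat.
rewrite sum_ptime natrB ?(ltnW lt_sn) // /plarge /psmall; field.
by apply/and4P; split; rewrite gt_eqF //; lra.
Qed.

Lemma load_compl x b : load x (~~ b) = 1 - load x b.
Proof. by rewrite -sum_ptime_eq1 -(load_compl_sum x b) addrC addKr. Qed.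

Lemma makespanE x b : makespan x = Num.max (load x b) (1 - load x b).
Proof. by rewrite -load_compl; case: b; rewrite /makespan // maxC. Qed.

Lemma makespan_ge_half x : 1 / 2 <= makespan x.
Proof.
rewrite (makespanE x true) le_max; apply/orP.
by case: (lerP (1 / 2) (load x true)) => ?; [left | right]; lra.
Qed.

Lemma flip_fuller_lt (x : solution) (i : 'I_n) : x i = fuller x -> 0 < ptime i ->
  (makespan (flip n x i) < makespan x) = (1 + ptime i < 2 * makespan x).
Proof.
move=> xi p_gt0.
rewrite (makespanE _ (x i)) load_flip makespan_fuller -xi gt_max.
have -> : load x (x i) - ptime i < load x (x i) by lra.
by apply/idP/idP => ?; lra.
Qed.

Lemma num_values_le : (num_values s n eps <= s.+1 * (n - s).+1)%N.
Proof.
pose vals := [seq h%:R * plarge + k%:R * psmall | h <- iota 0 s.+1, k <- iota 0 (n - s).+1].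
apply: (@leq_trans (size vals)); last by rewrite size_allpairs !size_iota.
apply: size_undup_subset => _ /mapP[x _ ->]; rewrite makespan_fuller load_counts.
apply/allpairsP; exists (nlarge_on x (fuller x), nsmall_on x (fuller x)).
by rewrite !mem_iota !ltnS nlarge_on_le nsmall_on_le.
Qed.

Hypotheses (eps_gt0 : 0 < eps) (eps_lt : eps < 1 / (2 * s%:R - 1)).

Lemma plarge_gt : 1 / (2 * s%:R) < plarge.
Proof.
have s_ge2 := natr_s_ge2.
have eps_lt1 : eps * (2 * s%:R - 1) < 1 by move: eps_lt; rewrite ltr_pdivlMr //; lra.
have -> : plarge = 1 / (2 * s%:R) + (1 - eps * (2 * s%:R - 1)) / (2 * s%:R * (2 * s%:R - 1)).
  by rewrite /plarge; field; apply/andP; split; rewrite gt_eqF //; lra.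
by rewrite ltrDl divr_gt0 //; [lra | apply: mulr_gt0; lra].
Qed.

Lemma plarge_gt0 : 0 < plarge.
Proof.
have s_ge2 := natr_s_ge2.
by apply: lt_trans plarge_gt; apply: divr_gt0; lra.
Qed.

Lemma psmall_gt0 : 0 < psmall.
Proof.
have s_ge2 := natr_s_ge2.
have lt_sn_R : s%:R < n%:R :> R by rewrite ltr_nat.
rewrite /psmall; apply: mulr_gt0; first by apply: divr_gt0; lra.
by apply: addr_gt0; apply: divr_gt0 => //; lra.
Qed.

Lemma ptime_gt0 i : 0 < ptime i.
Proof. by rewrite ptimeE; case: ifP => _; [exact: plarge_gt0 | exact: psmall_gt0]. Qed.

Lemma plarge_lt_half : plarge < 1 / 2.
Proof.
have s_ge2 := natr_s_ge2.
have := sum_ptime_eq1; rewrite sum_ptime => total.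
have : 0 < (n - s)%:R * psmall by rewrite mulr_gt0 ?psmall_gt0 // ltr0n subn_gt0.
have : 0 <= (s%:R - 2) * plarge by apply: mulr_ge0; [lra | exact: ltW plarge_gt0].
lra.
Qed.

Lemma local_opt_makespan_le x :
  local_opt x -> (0 < nsmall_on x (fuller x))%N -> 2 * makespan x <= 1 + psmall.
Proof.
move=> /forallP x_opt /card_gt0P[i]; rewrite inE => /andP[le_si /eqP xi].
by have := x_opt i; rewrite flip_fuller_lt ?ptime_gt0 // ptime_small // -leNgt.
Qed.

Definition nsmall_to_half (h : nat) : nat :=
  find (fun k => 1 / 2 <= h%:R * plarge + k%:R * psmall) (iota 0 n.+1).

Lemma nsmall_to_halfE h k : (k <= n)%N ->
  1 / 2 <= h%:R * plarge + k%:R * psmall ->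
  2 * (h%:R * plarge + k%:R * psmall) <= 1 + psmall ->
  nsmall_to_half h = k.
Proof.
move=> le_kn half_le le_half; apply: find_iota0_least => // j lt_jk; rewrite -ltNge.
have : (j%:R + 1) * psmall <= k%:R * psmall.
  by rewrite ler_wpM2r ?(ltW psmall_gt0) // natr1 ler_nat.
have := psmall_gt0; lra.
Qed.

Lemma num_local_values_le : (num_local_values s n eps <= 2 * s.+1)%N.
Proof.
pose vals := [seq h%:R * plarge | h <- iota 0 s.+1] ++
             [seq h%:R * plarge + (nsmall_to_half h)%:R * psmall | h <- iota 0 s.+1].
have -> : (2 * s.+1 = size vals)%N by rewrite size_cat !size_map size_iota addnn -mul2n.
apply: size_undup_subset => v /mapP[x]; rewrite mem_filter => /andP[x_opt _] ->.
have h_in : nlarge_on x (fuller x) \in iota 0 s.+1 by rewrite mem_iota ltnS nlarge_on_le.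
have le_kn : (nsmall_on x (fuller x) <= n)%N := leq_trans (nsmall_on_le _ _) (leq_subr _ _).
rewrite mem_cat; have [k_eq0|k_gt0] := posnP (nsmall_on x (fuller x)).
  by rewrite makespan_fuller load_counts k_eq0 mul0r addr0 (map_f (fun h => h%:R * plarge)).
have := local_opt_makespan_le _ x_opt k_gt0; have := makespan_ge_half x.
rewrite makespan_fuller load_counts => half_le le_half.
rewrite -(nsmall_to_halfE _ _ le_kn half_le le_half).
by rewrite (map_f (fun h => h%:R * plarge + (nsmall_to_half h)%:R * psmall)) ?orbT.
Qed.

Hypothesis le_3s_n : (3 * s <= n)%N.

Lemma psmall_lt_plarge : psmall < plarge.
Proof.
have := sum_ptime_eq1; rewrite sum_ptime => total.
have s_ge2 := natr_s_ge2.
have spL_gt : 1 < plarge * (2 * s%:R) by rewrite -ltr_pdivrMr; [exact: plarge_gt | lra].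
have spS_le : 0 <= ((n - s)%:R - 2 * s%:R) * psmall.
  by apply: mulr_ge0; [rewrite subr_ge0 -natrM ler_nat; lia | exact: ltW psmall_gt0].
by rewrite -subr_gt0 -(@pmulr_lgt0 _ (2 * s%:R)); lra.
Qed.

Hypotheses (s_even : ~~ odd s) (n_even : ~~ odd n).

Lemma balanced_makespan_gt x (h := nlarge_on x (fuller x)) (k := nsmall_on x (fuller x)) :
  1 / 2 < makespan x -> `|k%:R - (n - s)%:R / 2| < plarge / 2 * (n - s)%:R ->
  1 + psmall < 2 * makespan x.
Proof.
move=> half_lt balanced.
have := sum_ptime_eq1; rewrite sum_ptime => total.
have m_even : ~~ odd (n - s) by rewrite oddB ?(ltnW lt_sn) // (negbTE s_even) (negbTE n_even).
move: total balanced; rewrite (natr_even s_even) (natr_even m_even).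
set t := s./2; set m := (n - s)./2 => total balanced.
have pS_gt0 := psmall_gt0; have pL_gt0 := plarge_gt0.
have excess : makespan x - 1 / 2 = (h%:Z - t%:Z)%:~R * plarge + (k%:Z - m%:Z)%:~R * psmall.
  by rewrite makespan_fuller load_counts !intrB -!pmulrn; lra.
have dist : `|(k%:Z - m%:Z)%:~R * psmall| < plarge / 2.
  rewrite normrM (gtr0_norm pS_gt0) intrB -!pmulrn.
  apply: (lt_le_trans (y := plarge * m%:R * psmall)).
    rewrite ltr_pM2r //; move: balanced.
    have -> : 2 * m%:R / 2 = m%:R :> R by field.
    by have -> : plarge / 2 * (2 * m%:R) = plarge * m%:R by field.
  have tpL_ge0 : 0 <= t%:R * plarge by apply: mulr_ge0 => //; exact: ltW.
  have : plarge * (m%:R * psmall) <= plarge * (1 / 2) by rewrite ler_wpM2l ?(ltW pL_gt0) //; lra.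
  by rewrite mulrA; lra.
suff : psmall / 2 < makespan x - 1 / 2 by lra.
rewrite excess; apply: int_combination_gap => //; first by rewrite pS_gt0 ltW ?psmall_lt_plarge.
by rewrite -excess; lra.
Qed.

Lemma makespan_gt_half_cases x (k := nsmall_on x (fuller x)) :
  1 / 2 < makespan x ->
  (1 / 6 * n%:R <= k%:R :> R /\ ~~ local_opt x) \/
  (1 / 2 + plarge / 2) * (n - s)%:R <= (maxn k (n - s - k))%:R.
Proof.
move=> half_lt.
have [|unbalanced] := leP ((1 / 2 + plarge / 2) * (n - s)%:R) (maxn k (n - s - k))%:R.
  by right.
have balanced := dist_half_lt_of_maxn_lt (nsmall_on_le x _) unbalanced.
have k_ge : 1 / 6 * n%:R <= k%:R :> R.
  have : 0 <= (1 / 2 - plarge) * (n - s)%:R.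
    by apply: mulr_ge0; [rewrite subr_ge0; exact: ltW plarge_lt_half | exact: ler0n].
  have : 3 * s%:R <= n%:R :> R by rewrite -(natrM R 3) ler_nat.
  move: balanced; rewrite ltr_norml natrB ?(ltnW lt_sn) //; lra.
left; split => //; apply/negP => x_opt.
have k_gt0 : (0 < k)%N.
  rewrite -(ltr0n R); apply: lt_le_trans k_ge; apply: mulr_gt0; first lra.
  by rewrite ltr0n (leq_ltn_trans (leq0n s) lt_sn).
have := local_opt_makespan_le _ x_opt k_gt0.
have := balanced_makespan_gt x half_lt balanced; lra.
Qed.

End TwoJobSizes.

Theorem mainTheorem12 (R : realFieldType) (s : nat) (eps : R) :
  (2 <= s)%N -> ~~ odd s -> 0 < eps -> eps < 1 / (2 * s%:R - 1) ->
  exists (C1 C2 c a : R) (N0 : nat),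
    0 < C1 /\ 0 < C2 /\ 0 < c /\ 0 < a /\
    forall n : nat, (N0 <= n)%N -> (s < n)%N -> ~~ odd n ->
      [/\ (num_values s n eps)%:R <= C1 * n%:R,
          (num_local_values s n eps)%:R <= C2 &
          forall x : {ffun 'I_n -> bool}, 1 / 2 < makespan s n eps x ->
            (c * n%:R <= (nsmall_full s n eps x)%:R /\ ~~ local_opt s n eps x)
            \/ (1 / 2 + a) * (n - s)%:R <=
               (maxn (nsmall_full s n eps x) (n - s - nsmall_full s n eps x))%:R].
Proof.
move=> le2s s_even eps_gt0 eps_lt.
have pL_gt0 : 0 < plarge R s eps by apply: plarge_gt0.
exists s.+1%:R, (2 * s.+1)%:R, (1 / 6), (plarge R s eps / 2), (3 * s)%N.
split; first by rewrite ltr0n.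
split; first by rewrite ltr0n.
split; first lra.
split; first lra.
move=> n le_3s_n lt_sn n_even; split.
- rewrite -natrM ler_nat; apply: leq_trans (num_values_le _ _ _ _ lt_sn) _.
  by rewrite leq_mul2l; lia.
- by rewrite ler_nat; apply: num_local_values_le.
- by move=> x; apply: makespan_gt_half_cases.
Qed.
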